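(* Let $B,B^*,C,C_2>0$ and $q_1\in\mathbb{R}$ be constants, and let $\{\rho'_L\}_{L\in\mathbb{R}_+}$ be positive numbers with $\lim_{L\to\infty}\rho'_L=0$ and $\lim_{L\to\infty}\rho'_L\sqrt L=\infty$. For $L>1$ define $p_{0,L}=1-\frac1L$, $Z_{0,L}=\ln\frac{p_{0,L}}{1-p_{0,L}}$, $A_L=Z_{0,L}/2$, $$\varepsilon_L=\exp\Big\{\frac{B}{p_{0,L}}\Big[-\frac{L\rho'_L}{C}+\Big(\frac1C-\frac{p_{0,L}}{B}+\frac{3(1-p_{0,L})}{2B^*}\Big)Z_{0,L}+q_1\Big]\Big\},$$ and let $p_{1,L}\in\Big[0,\frac{e^{-Z_{0,L}}-\varepsilon_Le^{-C_2}}{e^{-A_L}-\varepsilon_Le^{-C_2}}\Big]$. Let $\{W_L\}$ be random variables whose expectations satisfy $$p_{0,L}(1-p_{1,L})\mathbb{E}(W_L)=-\frac{p_{0,L}\ln\varepsilon_L}{B}+\frac{\ln(\exp(L(C-\rho'_L))-1)}{C}+\Big[\frac1C-\frac{p_{0,L}}{B}+\frac{1-p_{0,L}}{B^*}\Big]Z_{0,L}+\frac{(1-p_{0,L})|A_L|}{B^*}+q_1.$$ Then $\liminf_{L\to\infty}-\frac{\ln\varepsilon_L}{L\rho'_L}\ge\frac BC$, and $\mathbb{E}(W_L)\le L+3\sqrt L$ for all sufficiently large $L$. *)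

From Stdlib Require Import Reals Lra.
Open Scope R_scope.

Definition p0 (L : R) : R := 1 - 1 / L.
Definition Z0L (L : R) : R := ln (p0 L / (1 - p0 L)).
Definition AL (L : R) : R := Z0L L / 2.

Definition epsL (B Bs C q1 : R) (rho : R -> R) (L : R) : R :=
  exp (B / p0 L * (- (L * rho L) / C
        + (1 / C - p0 L / B + 3 * (1 - p0 L) / (2 * Bs)) * Z0L L + q1)).

Definition lim_infty (f : R -> R) (l : R) : Prop :=
  forall e, e > 0 -> exists M, forall L, L > M -> Rabs (f L - l) < e.

Definition tends_pinfty (f : R -> R) : Prop :=
  forall K, exists M, forall L, L > M -> f L > K.

Definition liminf_ge (f : R -> R) (c : R) : Prop :=
  forall d, d > 0 -> exists M, forall L, L > M -> f L >= c - d.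

From Stdlib Require Import Reals Lra.
Open Scope R_scope.

(* Write ln eps_L = (B / p_0) (- L rho'_L / C + X_L), where the offset X_L is
   O(Z_0) + q_1 = O(sqrt L).  Since rho'_L sqrt L -> oo, X_L = o(L rho'_L), which
   gives the liminf, and also ln eps_L <= - 2 sqrt L < - ln L, i.e. eps_L < 1/L.
   In the equation for E(W_L) every Z_0-term cancels against the offset, so the
   right-hand side is L rho'_L / C + ln (e^{L (C - rho'_L)} - 1) / C <= L.  As for
   p_{1,L}: with eps_L < 1/L its upper bound is at most e^{-A_L} = 1/sqrt(L - 1), so
   p_0 (1 - p_1) >= L / (L + 3 sqrt L) once L >= 64. *)

Lemma ln_le_sub_1 (x : R) : 0 < x -> ln x <= x - 1.
Proof. intros hx. pose proof (exp_ineq1_le (ln x)) as h. rewrite exp_ln in h; lra. Qed.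

Lemma ln_lt_2_sqrt (x : R) : 0 < x -> ln x < 2 * sqrt x.
Proof.
  intros hx.
  assert (hs : 0 < sqrt x) by (apply sqrt_lt_R0; lra).
  rewrite <- (sqrt_sqrt x) at 1 by lra.
  rewrite ln_mult by lra.
  pose proof (ln_le_sub_1 _ hs); lra.
Qed.

Lemma ln_exp_sub_1_le (y : R) : 0 < y -> ln (exp y - 1) <= y.
Proof.
  intros hy.
  pose proof (exp_ineq1 y ltac:(lra)).
  rewrite <- (ln_exp y) at 2.
  apply Rlt_le, ln_increasing; lra.
Qed.

Lemma sub_div_sub_le (a b x : R) : 0 <= x < b -> a <= b -> (a - x) / (b - x) <= a / b.
Proof.
  intros hx hab.
  apply (Rmult_le_reg_r ((b - x) * b)); [nra |].
  replace ((a - x) / (b - x) * ((b - x) * b)) with ((a - x) * b) by (field; lra).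
  replace (a / b * ((b - x) * b)) with (a * (b - x)) by (field; lra).
  nra.
Qed.

Lemma inv_sqrt_pred_le (L : R) : 4 / 3 <= L -> / sqrt (L - 1) <= 2 / sqrt L.
Proof.
  intros hL.
  assert (h1 : 0 < sqrt (L - 1)) by (apply sqrt_lt_R0; lra).
  assert (h : sqrt L <= sqrt (L - 1) * 2).
  { replace 2 with (sqrt 4) by (rewrite <- (sqrt_square 2) by lra; f_equal; ring).
    rewrite <- sqrt_mult by lra. apply sqrt_le_1; lra. }
  assert (h2 : 0 < sqrt L) by (apply sqrt_lt_R0; lra).
  apply (Rmult_le_reg_r (sqrt (L - 1) * sqrt L)); [nra |].
  replace (/ sqrt (L - 1) * (sqrt (L - 1) * sqrt L)) with (sqrt L) by (field; lra).
  replace (2 / sqrt L * (sqrt (L - 1) * sqrt L)) with (sqrt (L - 1) * 2) by (field; lra).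
  exact h.
Qed.

Lemma p0_bounds (L : R) : 2 <= L -> 1 / 2 <= p0 L <= 1.
Proof.
  intros hL. unfold p0, Rdiv. rewrite !Rmult_1_l.
  pose proof (Rinv_0_lt_compat L ltac:(lra)).
  pose proof (Rinv_le_contravar 2 L ltac:(lra) hL); lra.
Qed.

Lemma inv_p0_bounds (L : R) : 2 <= L -> 1 <= / p0 L <= 2.
Proof.
  intros hL. pose proof (p0_bounds L hL).
  rewrite <- Rinv_1, <- (Rinv_inv 2).
  split; apply Rinv_le_contravar; lra.
Qed.

Lemma Z0L_eq (L : R) : 1 < L -> Z0L L = ln (L - 1).
Proof. intros hL. unfold Z0L, p0. f_equal. field. lra. Qed.

Lemma Z0L_nonneg (L : R) : 2 <= L -> 0 <= Z0L L.
Proof.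
  intros hL. rewrite Z0L_eq by lra.
  destruct (Rle_lt_or_eq_dec 1 (L - 1)) as [h | h]; [lra | |].
  - rewrite <- ln_1. apply Rlt_le, ln_increasing; lra.
  - rewrite <- h, ln_1; lra.
Qed.

Lemma Z0L_le_2_sqrt (L : R) : 1 < L -> Z0L L <= 2 * sqrt L.
Proof.
  intros hL. rewrite Z0L_eq by lra.
  pose proof (ln_increasing (L - 1) L ltac:(lra) ltac:(lra)).
  pose proof (ln_lt_2_sqrt L ltac:(lra)); lra.
Qed.

Lemma exp_neg_AL (L : R) : 1 < L -> exp (- AL L) = / sqrt (L - 1).
Proof.
  intros hL. unfold AL. rewrite exp_Ropp. f_equal.
  symmetry; apply sqrt_lem_1; [lra | apply Rlt_le, exp_pos |].
  rewrite <- exp_plus.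
  replace (Z0L L / 2 + Z0L L / 2) with (Z0L L) by field.
  rewrite Z0L_eq by lra. apply exp_ln; lra.
Qed.

Lemma exp_neg_Z0L (L : R) : exp (- Z0L L) = exp (- AL L) * exp (- AL L).
Proof. rewrite <- exp_plus. unfold AL. f_equal. field. Qed.

Lemma p1_le_2_div_sqrt (L e c p : R) : 2 <= L -> 0 <= e < / L -> 0 <= c <= 1 ->
  p <= (exp (- Z0L L) - e * c) / (exp (- AL L) - e * c) -> p <= 2 / sqrt L.
Proof.
  intros hL he hc hp.
  rewrite exp_neg_Z0L in hp.
  assert (hb : exp (- AL L) = / sqrt (L - 1)) by (apply exp_neg_AL; lra).
  set (b := exp (- AL L)) in *.
  assert (hsL : sqrt (L - 1) < L).
  { rewrite <- (sqrt_square L) at 2 by lra. apply sqrt_lt_1; nra. }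
  assert (hLb : / L < b) by (rewrite hb; apply Rinv_lt_contravar;
                               [apply Rmult_lt_0_compat; [apply sqrt_lt_R0|]|]; lra).
  assert (hb1 : b <= 1).
  { rewrite hb. rewrite <- Rinv_1 at 2. apply Rinv_le_contravar; [lra|].
    rewrite <- sqrt_1 at 1. apply sqrt_le_1; lra. }
  assert (hx : 0 <= e * c < b) by (split; nra).
  pose proof (sub_div_sub_le (b * b) b (e * c) hx ltac:(nra)) as hratio.
  replace (b * b / b) with b in hratio by (field; lra).
  pose proof (inv_sqrt_pred_le L ltac:(lra)); lra.
Qed.

Definition epsL_offset (B Bs C q1 L : R) : R :=
  (1 / C - p0 L / B + 3 * (1 - p0 L) / (2 * Bs)) * Z0L L + q1.

Lemma ln_epsL (B Bs C q1 : R) (rho : R -> R) (L : R) :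
  ln (epsL B Bs C q1 rho L) = B / p0 L * (- (L * rho L) / C + epsL_offset B Bs C q1 L).
Proof. unfold epsL, epsL_offset. rewrite ln_exp. f_equal. ring. Qed.

Lemma epsL_offset_O_sqrt (B Bs C q1 : R) : B > 0 -> Bs > 0 -> C > 0 ->
  exists K, forall L, L > 2 -> Rabs (epsL_offset B Bs C q1 L) <= K * sqrt L.
Proof.
  intros hB hBs hC.
  set (k := 1 / C + 1 / B + 3 / (2 * Bs)).
  exists (2 * k + Rabs q1). intros L hL.
  pose proof (p0_bounds L ltac:(lra)) as hp.
  pose proof (Z0L_nonneg L ltac:(lra)). pose proof (Z0L_le_2_sqrt L ltac:(lra)).
  assert (hs : 1 <= sqrt L) by (rewrite <- sqrt_1; apply sqrt_le_1; lra).
  set (c := 1 / C - p0 L / B + 3 * (1 - p0 L) / (2 * Bs)).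
  assert (hc : Rabs c <= k).
  { assert (0 < 1 / C) by (apply Rdiv_lt_0_compat; lra).
    assert (0 < 1 / B) by (apply Rdiv_lt_0_compat; lra).
    assert (0 < 1 / (2 * Bs)) by (apply Rdiv_lt_0_compat; lra).
    replace c with (1 / C - p0 L * (1 / B) + 3 * (1 - p0 L) * (1 / (2 * Bs)))
      by (unfold c; field; lra).
    replace k with (1 / C + 1 / B + 3 * (1 / (2 * Bs))) by (unfold k; field; lra).
    apply Rabs_le; split; nra. }
  unfold epsL_offset. fold c.
  eapply Rle_trans; [apply Rabs_triang |].
  rewrite Rabs_mult, (Rabs_pos_eq (Z0L L)) by lra.
  pose proof (Rabs_pos c). pose proof (Rabs_pos q1).
  assert (Rabs c * Z0L L <= k * (2 * sqrt L)) by (apply Rmult_le_compat; lra).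
  nra.
Qed.

Lemma O_sqrt_little_o (f g : R -> R) (K M : R) :
  tends_pinfty (fun L => f L * sqrt L) ->
  (forall L, L > M -> Rabs (g L) <= K * sqrt L) ->
  forall d, d > 0 -> exists N, forall L, L > N -> Rabs (g L) <= d * (L * f L).
Proof.
  intros hf hg d hd.
  destruct (hf (K / d)) as [N hN].
  exists (Rmax (Rmax M N) 0). intros L hL.
  pose proof (Rmax_l (Rmax M N) 0). pose proof (Rmax_r (Rmax M N) 0).
  pose proof (Rmax_l M N). pose proof (Rmax_r M N).
  specialize (hN L ltac:(lra)). cbv beta in hN.
  assert (hs : 0 < sqrt L) by (apply sqrt_lt_R0; lra).
  assert (hsL : sqrt L * sqrt L = L) by (apply sqrt_sqrt; lra).
  replace (d * (L * f L)) with (d * sqrt L * (f L * sqrt L))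
    by (transitivity (d * (sqrt L * sqrt L) * f L); [ring | rewrite hsL; ring]).
  eapply Rle_trans; [apply hg; lra |].
  replace (K * sqrt L) with (d * sqrt L * (K / d)) by (field; lra).
  apply Rmult_le_compat_l; nra.
Qed.

Section Asymptotics_of_epsL.

Variables (B Bs C q1 : R) (rho : R -> R).
Hypotheses (hB : B > 0) (hBs : Bs > 0) (hC : C > 0)
  (hrho_pos : forall L, L > 0 -> rho L > 0)
  (hrho_sqrt : tends_pinfty (fun L => rho L * sqrt L)).

Lemma liminf_neg_ln_epsL :
  liminf_ge (fun L => - ln (epsL B Bs C q1 rho L) / (L * rho L)) (B / C).
Proof.
  intros d hd.
  destruct (epsL_offset_O_sqrt B Bs C q1 hB hBs hC) as [K hK].
  destruct (O_sqrt_little_o rho _ K 2 hrho_sqrt hK (d / (2 * B))) as [N hN].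
  { apply Rdiv_lt_0_compat; lra. }
  exists (Rmax 2 N). intros L hL. cbv beta.
  pose proof (Rmax_l 2 N). pose proof (Rmax_r 2 N).
  specialize (hN L ltac:(lra)).
  pose proof (inv_p0_bounds L ltac:(lra)) as hw.
  assert (hr : rho L > 0) by (apply hrho_pos; lra).
  rewrite ln_epsL.
  set (X := epsL_offset B Bs C q1 L) in *.
  set (Lr := L * rho L) in *.
  assert (hLr : Lr > 0) by (unfold Lr; nra).
  set (y := X / Lr).
  assert (hy : y <= d / (2 * B)).
  { apply (Rmult_le_reg_r Lr); [lra |].
    replace (y * Lr) with X by (unfold y; field; lra).
    pose proof (Rle_abs X); lra. }
  assert (hwy : / p0 L * y <= 2 * (d / (2 * B))).
  { assert (0 < d / (2 * B)) by (apply Rdiv_lt_0_compat; lra).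
    destruct (Rle_or_lt 0 y); nra. }
  replace (- (B / p0 L * (- Lr / C + X)) / Lr) with (B / C * / p0 L - B * (/ p0 L * y))
    by (unfold y; field; pose proof (p0_bounds L ltac:(lra)); repeat split; lra).
  assert (B / C * / p0 L >= B / C) by (assert (0 < B / C) by (apply Rdiv_lt_0_compat; lra); nra).
  assert (B * (2 * (d / (2 * B))) = d) by (field; lra).
  nra.
Qed.

Lemma epsL_eventually_lt_inv :
  exists N, forall L, L > N -> epsL B Bs C q1 rho L < / L.
Proof.
  destruct (epsL_offset_O_sqrt B Bs C q1 hB hBs hC) as [K hK].
  set (g L := Rabs (epsL_offset B Bs C q1 L) + 2 / B * sqrt L).
  assert (hg : forall L, L > 2 -> Rabs (g L) <= (K + 2 / B) * sqrt L).
  { intros L hL. specialize (hK L hL).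
    assert (0 < 2 / B) by (apply Rdiv_lt_0_compat; lra).
    assert (0 <= sqrt L) by apply sqrt_pos.
    unfold g. rewrite Rabs_pos_eq by (pose proof (Rabs_pos (epsL_offset B Bs C q1 L)); nra).
    lra. }
  destruct (O_sqrt_little_o rho g _ 2 hrho_sqrt hg (/ C)) as [N hN].
  { apply Rinv_0_lt_compat; lra. }
  exists (Rmax 2 N). intros L hL.
  pose proof (Rmax_l 2 N). pose proof (Rmax_r 2 N).
  specialize (hN L ltac:(lra)).
  pose proof (inv_p0_bounds L ltac:(lra)) as hw.
  set (X := epsL_offset B Bs C q1 L) in *.
  assert (hgap : 2 / B * sqrt L <= L * rho L / C - X).
  { unfold g in hN. fold X in hN.
    replace (/ C * (L * rho L)) with (L * rho L / C) in hN by (field; lra).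
    pose proof (Rle_abs (Rabs X + 2 / B * sqrt L)). pose proof (Rle_abs X). lra. }
  assert (hlneps : ln (epsL B Bs C q1 rho L) <= - (2 * sqrt L)).
  { rewrite ln_epsL. fold X.
    replace (B / p0 L * (- (L * rho L) / C + X)) with (- (B * / p0 L * (L * rho L / C - X)))
      by (field; pose proof (p0_bounds L ltac:(lra)); repeat split; lra).
    set (D := L * rho L / C - X) in *.
    assert (hBD : 2 * sqrt L <= B * D).
    { replace (2 * sqrt L) with (B * (2 / B * sqrt L)) by (field; lra).
      apply Rmult_le_compat_l; lra. }
    pose proof (sqrt_pos L).
    assert (B * D <= B * / p0 L * D) by nra.
    lra. }
  pose proof (ln_lt_2_sqrt L ltac:(lra)).
  apply ln_lt_inv; [apply exp_pos | apply Rinv_0_lt_compat; lra |].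
  rewrite ln_Rinv by lra. lra.
Qed.

End Asymptotics_of_epsL.

(* The Z0L-terms and [q1] add up to [epsL_offset], cancelling the offset in [ln epsL]. *)
Lemma EW_rhs_eq (B Bs C q1 : R) (rho : R -> R) (L : R) :
  B > 0 -> Bs > 0 -> C > 0 -> 2 <= L ->
  - (p0 L * ln (epsL B Bs C q1 rho L)) / B
  + ln (exp (L * (C - rho L)) - 1) / C
  + (1 / C - p0 L / B + (1 - p0 L) / Bs) * Z0L L
  + (1 - p0 L) * Rabs (AL L) / Bs
  + q1
  = L * rho L / C + ln (exp (L * (C - rho L)) - 1) / C.
Proof.
  intros hB hBs hC hL.
  pose proof (p0_bounds L hL). pose proof (Z0L_nonneg L hL).
  rewrite ln_epsL, Rabs_pos_eq by (unfold AL; lra).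
  unfold epsL_offset, AL. field. repeat split; lra.
Qed.

Lemma le_add_3_sqrt (L p E : R) : 64 <= L -> 0 <= p <= 2 / sqrt L ->
  p0 L * (1 - p) * E <= L -> E <= L + 3 * sqrt L.
Proof.
  intros hL hp hE.
  pose proof (sqrt_pos L).
  set (s := sqrt L) in *.
  assert (hs : s * s = L) by (apply sqrt_sqrt; lra).
  assert (hs8 : 8 <= s) by nra.
  assert (hps : p * s <= 2) by (assert (2 / s * s = 2) by (field; lra); nra).
  assert (hp0 : p0 L = 1 - / s * / s) by (unfold p0; rewrite <- hs; field; lra).
  set (P := p0 L * (1 - p)) in *.
  assert (hu : 0 < / s <= / 8) by (split; [apply Rinv_0_lt_compat | apply Rinv_le_contravar]; lra).
  assert (hq : 0 <= p * s) by nra.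
  assert (hP : L <= (L + 3 * s) * P).
  { rewrite <- hs. unfold P. rewrite hp0.
    set (u := / s) in *. set (q := p * s) in *.
    replace ((s * s + 3 * s) * ((1 - u * u) * (1 - p)))
      with (s * s + 3 * s - 1 - 3 * u - (s + 3) * q + q * u * (1 + 3 * u))
      by (unfold u, q; field; lra).
    assert ((s + 3) * q <= (s + 3) * 2) by nra.
    assert (0 <= q * u * (1 + 3 * u)) by (apply Rmult_le_pos; nra).
    lra. }
  assert (hP0 : 0 < P) by nra.
  apply (Rmult_le_reg_l P); nra.
Qed.

Theorem lemma4 (B Bs C C2 q1 : R) (rho p1 EW : R -> R) (L0 : R)
  (hB : B > 0) (hBs : Bs > 0) (hC : C > 0) (hC2 : C2 > 0)
  (hrho_pos : forall L, L > 0 -> rho L > 0)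
  (hrho0 : lim_infty rho 0)
  (hrho_sqrt : tends_pinfty (fun L => rho L * sqrt L))
  (hL0 : L0 >= 1)
  (hp1 : forall L, L > L0 ->
     0 <= p1 L /\
     p1 L <= (exp (- Z0L L) - epsL B Bs C q1 rho L * exp (- C2))
             / (exp (- AL L) - epsL B Bs C q1 rho L * exp (- C2)))
  (hEW : forall L, L > L0 ->
     p0 L * (1 - p1 L) * EW L =
       - (p0 L * ln (epsL B Bs C q1 rho L)) / B
       + ln (exp (L * (C - rho L)) - 1) / C
       + (1 / C - p0 L / B + (1 - p0 L) / Bs) * Z0L L
       + (1 - p0 L) * Rabs (AL L) / Bs
       + q1) :
  liminf_ge (fun L => - ln (epsL B Bs C q1 rho L) / (L * rho L)) (B / C) /\
  (exists M, forall L, L > M -> EW L <= L + 3 * sqrt L).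
Proof.
  split; [exact (liminf_neg_ln_epsL B Bs C q1 rho hB hBs hC hrho_pos hrho_sqrt) |].
  destruct (epsL_eventually_lt_inv B Bs C q1 rho hB hBs hC hrho_sqrt) as [N1 hN1].
  destruct (hrho0 C hC) as [N0 hN0].
  exists (Rmax (Rmax 64 L0) (Rmax N0 N1)). intros L hL.
  pose proof (Rmax_l 64 L0). pose proof (Rmax_r 64 L0).
  pose proof (Rmax_l N0 N1). pose proof (Rmax_r N0 N1).
  pose proof (Rmax_l (Rmax 64 L0) (Rmax N0 N1)). pose proof (Rmax_r (Rmax 64 L0) (Rmax N0 N1)).
  (* [rho L < C] keeps the argument of [ln] positive ([ln] is 0 elsewhere). *)
  assert (hrho : 0 < rho L < C).
  { specialize (hN0 L ltac:(lra)). rewrite Rminus_0_r in hN0.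
    apply Rabs_def2 in hN0. pose proof (hrho_pos L ltac:(lra)). lra. }
  destruct (hp1 L ltac:(lra)) as [hp1_nonneg hp1_le].
  apply (le_add_3_sqrt L (p1 L)); [lra | split; [lra |] |].
  - assert (0 < exp (- C2) <= 1).
    { split; [apply exp_pos | rewrite <- exp_0; left; apply exp_increasing; lra]. }
    apply (p1_le_2_div_sqrt L (epsL B Bs C q1 rho L) (exp (- C2))); try lra.
    split; [left; apply exp_pos | apply hN1; lra].
  - rewrite hEW, EW_rhs_eq by lra.
    pose proof (ln_exp_sub_1_le (L * (C - rho L)) ltac:(nra)).
    apply (Rmult_le_reg_r C); [lra |].
    replace ((L * rho L / C + ln (exp (L * (C - rho L)) - 1) / C) * C)
      with (L * rho L + ln (exp (L * (C - rho L)) - 1)) by (field; lra).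
    nra.
Qed.
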